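(* Consider two circular bodies in $\mathbb R^2$ of equal mass ($\mu_1=\mu_2=1/2$) and radii $R_1,R_2$, moving on elliptic Keplerian orbits about a fixed center and interacting only by elastic or inelastic collisions, as described in the context; let $D=R_1+R_2$. Let $\gamma=2L^2/D>1$ and $e=\gamma-\sqrt{\gamma^2-\gamma+1}$. If $$EL^2<-\frac{(1-e^2)(1+e)^2}{16e^2},$$ then the two bodies remain on elliptic orbits.
   Context: Units are chosen so that each body's center $\mathbf x_i\in\mathbb R^2$ moves, between collisions, with acceleration $-\mathbf x_i/|\mathbf x_i|^3$ (fixed attracting center at the origin; no mutual gravitation). Bodies have masses $m_1,m_2$, $\mu_i=m_i/(m_1+m_2)$. Specific energy $E_i=|\mathbf v_i|^2/2-1/|\mathbf x_i|$, signed specific angular momentum $L_i=x_{i,1}v_{i,2}-x_{i,2}v_{i,1}$; the orbit of body $i$ is elliptic iff $E_i<0$. Set $E=\mu_1E_1+\mu_2E_2$, $L=\mu_1L_1+\mu_2L_2$. A collision occurs when $|\mathbf x_1-\mathbf x_2|=D$ and $\mathbf n\cdot\mathbf w<0$, where $\mathbf n=(\mathbf x_1-\mathbf x_2)/D$, $\mathbf w=\mathbf v_1-\mathbf v_2$; then $\mathbf w'=(I-\mathbf n\otimes\mathbf n)\mathbf w-(1-2\varepsilon)(\mathbf n\otimes\mathbf n)\mathbf w$ with $\varepsilon\in[0,1/2]$ ($\varepsilon=0$ elastic), and with $\mathbf v=\mu_1\mathbf v_1+\mu_2\mathbf v_2$ the outgoing velocities are $\mathbf v_1'=\mathbf v+\mu_2\mathbf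 w'$, $\mathbf v_2'=\mathbf v-\mu_1\mathbf w'$. *)

From Stdlib Require Import Reals Lra.
Open Scope R_scope.

Definition vec : Type := (R * R)%type.
Definition vadd (a b : vec) : vec := (fst a + fst b, snd a + snd b).
Definition vsub (a b : vec) : vec := (fst a - fst b, snd a - snd b).
Definition vscale (c : R) (a : vec) : vec := (c * fst a, c * snd a).
Definition dot (a b : vec) : R := fst a * fst b + snd a * snd b.
Definition vnorm (a : vec) : R := sqrt (dot a a).

Definition energy (x v : vec) : R := dot v v / 2 - 1 / vnorm x.
Definition angmom (x v : vec) : R := fst x * snd v - snd x * fst v.

Definition mu1 : R := 1/2.
Definition mu2 : R := 1/2.

Definition totE (x1 v1 x2 v2 : vec) : R := mu1 * energy x1 v1 + mu2 * energy x2 v2.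
Definition totL (x1 v1 x2 v2 : vec) : R := mu1 * angmom x1 v1 + mu2 * angmom x2 v2.

Definition cnormal (D : R) (x1 x2 : vec) : vec := vscale (/ D) (vsub x1 x2).
Definition relvel (v1 v2 : vec) : vec := vsub v1 v2.

(* w' = (I - n n^T) w - (1 - 2 eps) (n n^T) w *)
Definition wout (eps : R) (n w : vec) : vec :=
  vsub (vsub w (vscale (dot n w) n)) (vscale ((1 - 2 * eps) * dot n w) n).

Definition v1out (eps D : R) (x1 x2 v1 v2 : vec) : vec :=
  vadd (vadd (vscale mu1 v1) (vscale mu2 v2))
       (vscale mu2 (wout eps (cnormal D x1 x2) (relvel v1 v2))).
Definition v2out (eps D : R) (x1 x2 v1 v2 : vec) : vec :=
  vsub (vadd (vscale mu1 v1) (vscale mu2 v2))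
       (vscale mu1 (wout eps (cnormal D x1 x2) (relvel v1 v2))).

Definition gam (D L : R) : R := 2 * L ^ 2 / D.
Definition ecc (D L : R) : R := gam D L - sqrt (gam D L ^ 2 - gam D L + 1).

Definition ellip_cond (D E L : R) : Prop :=
  1 < gam D L /\
  E * L ^ 2 < - ((1 - ecc D L ^ 2) * (1 + ecc D L) ^ 2 / (16 * ecc D L ^ 2)).

From Stdlib Require Import Reals Lra Psatz.
Open Scope R_scope.

(* In the frame of the collision normal the collision only redistributes the normal velocity
   components: the tangential ones, hence the total angular momentum [L], are kept, and the total
   energy [E] does not increase. Suppose body 1 leaves with nonnegative energy (body 2 is the same
   after exchanging the bodies). Its new normal velocity [c] lies between the old ones [a1 < a2],
   so [a1 < c0 <= c <= a2] where [c0] is the normal velocity making body 1 parabolic. Giving body 1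
   the normal velocity [c0] and body 2 the normal velocity [a1 + a2 - c0] keeps [L] and leaves
   body 2 with squared speed at most [Q], where [4 E = Q - 2 / r2]. Cauchy-Schwarz then gives
   [2 |L| <= sqrt (2 (r2 + D)) + r2 sqrt Q], and with [2 L^2 = gamma D] this forces
   [E L^2 >= - (1 - e^2) (1 + e)^2 / (16 e^2)], contradicting the hypothesis. *)

Lemma lagrange_dot_angmom (n v : vec) :
  dot n n * dot v v = dot n v ^ 2 + angmom n v ^ 2.
Proof. destruct n, v; unfold dot, angmom; simpl; ring. Qed.

Lemma angmom_frame (n x v : vec) :
  dot n n * angmom x v = dot n x * angmom n v - angmom n x * dot n v.
Proof. destruct n, x, v; unfold dot, angmom; simpl; ring. Qed.

Lemma dot_relvel (n v1 v2 : vec) : dot n (relvel v1 v2) = dot n v1 - dot n v2.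
Proof. destruct n, v1, v2; unfold dot, relvel, vsub; simpl; ring. Qed.

Lemma dot_kick (n v : vec) (c : R) :
  dot n (vsub v (vscale c n)) = dot n v - c * dot n n.
Proof. destruct n, v; unfold dot, vsub, vscale; simpl; ring. Qed.

Lemma angmom_kick (n v : vec) (c : R) : angmom n (vsub v (vscale c n)) = angmom n v.
Proof. destruct n, v; unfold angmom, vsub, vscale; simpl; ring. Qed.

Lemma vnorm_pow2 (x : vec) : vnorm x ^ 2 = dot x x.
Proof.
  apply pow2_sqrt; destruct x; unfold dot; simpl; nra.
Qed.

Lemma vnorm_pos (x : vec) : x <> (0, 0) -> 0 < vnorm x.
Proof.
  destruct x as [p q]; intro Hx; apply sqrt_lt_R0; unfold dot; simpl.
  destruct (Req_dec p 0) as [-> | Hp]; [destruct (Req_dec q 0) as [-> | Hq] |].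
  - now contradiction Hx.
  - pose proof (Rsqr_pos_lt q Hq); unfold Rsqr in *; lra.
  - pose proof (Rsqr_pos_lt p Hp); pose proof (Rle_0_sqr q); unfold Rsqr in *; lra.
Qed.

Lemma cnormal_unit (D : R) (x1 x2 : vec) :
  0 < D -> vnorm (vsub x1 x2) = D -> dot (cnormal D x1 x2) (cnormal D x1 x2) = 1.
Proof.
  intros HD Hdist.
  assert (Hsq : dot (vsub x1 x2) (vsub x1 x2) = D ^ 2) by now rewrite <- vnorm_pow2, Hdist.
  destruct x1 as [p1 q1], x2 as [p2 q2]; unfold cnormal, vscale, dot, vsub in *; simpl in *.
  replace (/ D * (p1 - p2) * (/ D * (p1 - p2)) + / D * (q1 - q2) * (/ D * (q1 - q2)))
    with (((p1 - p2) * (p1 - p2) + (q1 - q2) * (q1 - q2)) / D ^ 2) by (field; lra).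
  rewrite Hsq; field; lra.
Qed.

Lemma dot_cnormal_sub (D : R) (x1 x2 : vec) : D <> 0 ->
  dot (cnormal D x1 x2) x2 = dot (cnormal D x1 x2) x1 - D * dot (cnormal D x1 x2) (cnormal D x1 x2).
Proof. intro HD; destruct x1, x2; unfold cnormal, vscale, vsub, dot; simpl; field; exact HD. Qed.

Lemma angmom_cnormal_sub (D : R) (x1 x2 : vec) :
  angmom (cnormal D x1 x2) x2 = angmom (cnormal D x1 x2) x1.
Proof. destruct x1, x2; unfold cnormal, vscale, vsub, angmom; simpl; ring. Qed.

Lemma v1out_kick (eps D : R) (x1 x2 v1 v2 : vec) :
  v1out eps D x1 x2 v1 v2 =
  vsub v1 (vscale ((1 - eps) * dot (cnormal D x1 x2) (relvel v1 v2)) (cnormal D x1 x2)).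
Proof.
  unfold v1out; generalize (cnormal D x1 x2); intros [n1 n2].
  destruct v1, v2; unfold wout, relvel, vadd, vsub, vscale, dot, mu1, mu2; simpl; f_equal; field.
Qed.

Lemma v2out_kick (eps D : R) (x1 x2 v1 v2 : vec) :
  v2out eps D x1 x2 v1 v2 =
  vadd v2 (vscale ((1 - eps) * dot (cnormal D x1 x2) (relvel v1 v2)) (cnormal D x1 x2)).
Proof.
  unfold v2out; generalize (cnormal D x1 x2); intros [n1 n2].
  destruct v1, v2; unfold wout, relvel, vadd, vsub, vscale, dot, mu1, mu2; simpl; f_equal; field.
Qed.

Lemma v2out_swap (eps D : R) (x1 x2 v1 v2 : vec) :
  v2out eps D x1 x2 v1 v2 = v1out eps D x2 x1 v2 v1.
Proof.
  rewrite v2out_kick, v1out_kick.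
  destruct x1, x2, v1, v2; unfold cnormal, relvel, vadd, vsub, vscale, dot; simpl; f_equal; ring.
Qed.

Lemma vnorm_vsub_swap (x1 x2 : vec) : vnorm (vsub x2 x1) = vnorm (vsub x1 x2).
Proof. destruct x1, x2; unfold vnorm, vsub, dot; simpl; f_equal; ring. Qed.

Lemma approach_swap (D : R) (x1 x2 v1 v2 : vec) :
  dot (cnormal D x2 x1) (relvel v2 v1) = dot (cnormal D x1 x2) (relvel v1 v2).
Proof. destruct x1, x2, v1, v2; unfold cnormal, relvel, vsub, vscale, dot; simpl; ring. Qed.

Lemma totE_swap (x1 v1 x2 v2 : vec) : totE x2 v2 x1 v1 = totE x1 v1 x2 v2.
Proof. unfold totE, mu1, mu2; ring. Qed.

Lemma totL_swap (x1 v1 x2 v2 : vec) : totL x2 v2 x1 v1 = totL x1 v1 x2 v2.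
Proof. unfold totL, mu1, mu2; ring. Qed.

Lemma totL_out (eps D : R) (x1 x2 v1 v2 : vec) :
  totL x1 (v1out eps D x1 x2 v1 v2) x2 (v2out eps D x1 x2 v1 v2) = totL x1 v1 x2 v2.
Proof.
  rewrite v1out_kick, v2out_kick.
  destruct x1, x2, v1, v2; unfold totL, angmom, cnormal, relvel, vadd, vsub, vscale, dot, mu1, mu2;
    simpl; ring.
Qed.

Lemma totE_out (eps D : R) (x1 x2 v1 v2 : vec) :
  dot (cnormal D x1 x2) (cnormal D x1 x2) = 1 ->
  totE x1 (v1out eps D x1 x2 v1 v2) x2 (v2out eps D x1 x2 v1 v2) =
  totE x1 v1 x2 v2 - eps * (1 - eps) * dot (cnormal D x1 x2) (relvel v1 v2) ^ 2 / 2.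
Proof.
  intro Hn; rewrite v1out_kick, v2out_kick.
  set (n := cnormal D x1 x2) in *; set (a := dot n (relvel v1 v2)).
  transitivity (totE x1 v1 x2 v2 - (1 - eps) * a ^ 2 / 2 + (1 - eps) ^ 2 * a ^ 2 * dot n n / 2).
  - unfold a; rewrite dot_relvel; clearbody n; unfold totE, energy.
    generalize (1 / vnorm x1) (1 / vnorm x2); intros i1 i2.
    destruct n, v1, v2; unfold vadd, vsub, vscale, dot, mu1, mu2; simpl; field.
  - rewrite Hn; field.
Qed.

Lemma cauchy_schwarz_cross (m k b c : R) : (m * b - k * c) ^ 2 <= (m ^ 2 + k ^ 2) * (b ^ 2 + c ^ 2).
Proof.
  assert (Hid : (m ^ 2 + k ^ 2) * (b ^ 2 + c ^ 2) - (m * b - k * c) ^ 2 = (m * c + k * b) ^ 2)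
    by ring.
  pose proof (pow2_ge_0 (m * c + k * b)); lra.
Qed.

Lemma pow2_add_le (X Y s t : R) : 0 <= s -> 0 <= t ->
  X ^ 2 <= s ^ 2 -> Y ^ 2 <= t ^ 2 -> (X + Y) ^ 2 <= (s + t) ^ 2.
Proof.
  intros Hs Ht HX HY.
  assert (Xs : Rabs X <= s)
    by (apply Rsqr_incr_0_var; [rewrite <- Rsqr_abs; unfold Rsqr; lra | exact Hs]).
  assert (Yt : Rabs Y <= t)
    by (apply Rsqr_incr_0_var; [rewrite <- Rsqr_abs; unfold Rsqr; lra | exact Ht]).
  pose proof (Rabs_triang X Y); pose proof (Rabs_pos (X + Y)).
  rewrite <- (pow2_abs (X + Y)); nra.
Qed.

Lemma ecc_spec (D L : R) : 1 < gam D L ->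
  0 < ecc D L /\ 2 * ecc D L < 1 /\ gam D L * (1 - 2 * ecc D L) = 1 - ecc D L ^ 2.
Proof.
  intros Hg; unfold ecc; set (g := gam D L) in *.
  assert (HS : sqrt (g ^ 2 - g + 1) * sqrt (g ^ 2 - g + 1) = g ^ 2 - g + 1)
    by (apply sqrt_sqrt; nra).
  pose proof (sqrt_pos (g ^ 2 - g + 1)).
  repeat split; nra.
Qed.

Lemma quadratic_nonneg (A B K s : R) :
  0 < A -> B ^ 2 - 4 * A * K <= 0 -> 0 <= A * s ^ 2 + B * s + K.
Proof.
  intros HA Hdisc.
  assert (Hsq : 4 * A * (A * s ^ 2 + B * s + K) = (2 * A * s + B) ^ 2 - (B ^ 2 - 4 * A * K))
    by ring.
  pose proof (pow2_ge_0 (2 * A * s + B)).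
  apply (Rmult_le_reg_l (4 * A)); lra.
Qed.

(* The proof is a certificate: [(1+e) G = mu H + A s^2 + B s + K] with [mu >= 0] and a quadratic
   in [s] of nonpositive discriminant, where [G >= 0] is the goal and [H >= 0] the hypothesis. *)
Lemma ecc_poly_ineq (e r s t : R) : 0 < e -> 2 * e < 1 -> 0 < r -> 0 <= t -> 2 * r <= s ^ 2 ->
  (1 - e ^ 2) * (s ^ 2 - 2 * r) <= (s + t) ^ 2 * (1 - 2 * e) ->
  e ^ 2 * (2 * r - t ^ 2) * (s ^ 2 - 2 * r) <= (1 + e) ^ 2 * (1 - 2 * e) * r ^ 2.
Proof.
  intros He He2 Hr Ht Hs Hhyp.
  destruct (Rle_dec (2 * r) (t ^ 2)) as [Hrt | Hrt].
  { assert (0 <= e ^ 2 * (t ^ 2 - 2 * r) * (s ^ 2 - 2 * r))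
      by (apply Rmult_le_pos; [apply Rmult_le_pos|]; nra).
    assert (0 <= (1 + e) ^ 2 * (1 - 2 * e) * r ^ 2)
      by (apply Rmult_le_pos; [apply Rmult_le_pos|]; nra).
    nra. }
  set (G := (1 + e) ^ 2 * (1 - 2 * e) * r ^ 2 - e ^ 2 * (2 * r - t ^ 2) * (s ^ 2 - 2 * r)).
  set (H := (s + t) ^ 2 * (1 - 2 * e) - (1 - e ^ 2) * (s ^ 2 - 2 * r)).
  set (mu := e * r * (1 - 2 * e) * (1 + e) + 2 * e ^ 2 * (2 * r - t ^ 2)).
  set (A := e ^ 2 * (1 - 2 * e) * ((1 - e) * t ^ 2 + e * (3 - e) * r)).
  set (B := - 2 * e * r * t + 4 * e ^ 2 * t ^ 3 - 2 * e ^ 2 * r * t - 8 * e ^ 3 * t ^ 3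
            + 16 * e ^ 3 * r * t - 8 * e ^ 4 * r * t).
  set (K := r ^ 2 - e * r * t ^ 2 - e * r ^ 2 + 2 * e ^ 2 * t ^ 4 + e ^ 2 * r * t ^ 2
            - 5 * e ^ 2 * r ^ 2 - 4 * e ^ 3 * t ^ 4 + 6 * e ^ 3 * r * t ^ 2 + 5 * e ^ 3 * r ^ 2
            - 8 * e ^ 4 * r * t ^ 2 + 4 * e ^ 4 * r ^ 2 - 4 * e ^ 5 * r ^ 2).
  set (W := (1 - 2 * e) ^ 2 * (3 + 4 * e - e ^ 2 - 2 * e ^ 3) * r
            + 2 * e * (1 - 2 * e) ^ 2 * (1 + e) * (2 * r - t ^ 2)).
  assert (Hcert : (1 + e) * G = mu * H + (A * s ^ 2 + B * s + K))
    by (unfold G, H, mu, A, B, K; ring).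
  assert (Hdisc : B ^ 2 - 4 * A * K = - 4 * e ^ 3 * ((1 - e) * r - t ^ 2) ^ 2 * W)
    by (unfold A, B, K, W; ring).
  assert (HA : 0 < A).
  { assert (0 <= (1 - e) * t ^ 2) by (apply Rmult_le_pos; nra).
    assert (0 < e * (3 - e) * r) by (apply Rmult_lt_0_compat; [apply Rmult_lt_0_compat|]; lra).
    apply Rmult_lt_0_compat; [apply Rmult_lt_0_compat|]; nra. }
  assert (HW : 0 <= W).
  { assert (0 <= (1 - 2 * e) ^ 2 * (3 + 4 * e - e ^ 2 - 2 * e ^ 3) * r)
      by (apply Rmult_le_pos; [apply Rmult_le_pos|]; nra).
    assert (0 <= 2 * e * (1 - 2 * e) ^ 2 * (1 + e) * (2 * r - t ^ 2))
      by (apply Rmult_le_pos; [repeat apply Rmult_le_pos|]; nra).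
    unfold W; lra. }
  assert (Hquad : 0 <= A * s ^ 2 + B * s + K).
  { apply quadratic_nonneg; [exact HA|]. rewrite Hdisc.
    assert (0 <= e ^ 3 * ((1 - e) * r - t ^ 2) ^ 2 * W)
      by (apply Rmult_le_pos; [apply Rmult_le_pos; [apply pow_le; lra | apply pow2_ge_0] | lra]).
    lra. }
  assert (Hmu : 0 <= mu).
  { assert (0 <= e * r * (1 - 2 * e) * (1 + e)) by (repeat apply Rmult_le_pos; lra).
    assert (0 <= 2 * e ^ 2 * (2 * r - t ^ 2)) by (apply Rmult_le_pos; nra).
    unfold mu; lra. }
  assert (0 <= mu * H) by (apply Rmult_le_pos; unfold H; lra).
  assert (0 <= G) by nra.
  unfold G in *; lra.
Qed.

Lemma energy_momentum_bound (D r t L E : R) : 0 < D -> 0 < r -> 0 <= t ->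
  4 * r ^ 2 * E = t ^ 2 - 2 * r ->
  (2 * L) ^ 2 <= (sqrt (2 * (r + D)) + t) ^ 2 ->
  1 < gam D L ->
  - ((1 - ecc D L ^ 2) * (1 + ecc D L) ^ 2 / (16 * ecc D L ^ 2)) <= E * L ^ 2.
Proof.
  intros HD Hr Ht HE HL Hg.
  destruct (ecc_spec D L Hg) as (He & He2 & Hge).
  set (e := ecc D L) in *; set (s := sqrt (2 * (r + D))) in *.
  assert (Hs : s ^ 2 - 2 * r = 2 * D) by (unfold s; rewrite pow2_sqrt; lra).
  assert (HL2 : L ^ 2 = D * (1 - e ^ 2) / (2 * (1 - 2 * e)))
    by (rewrite <- Hge; unfold gam; field; lra).
  assert (Hpoly : e ^ 2 * (2 * r - t ^ 2) * (s ^ 2 - 2 * r) <= (1 + e) ^ 2 * (1 - 2 * e) * r ^ 2).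
  { apply ecc_poly_ineq; try lra.
    rewrite Hs; replace ((2 * L) ^ 2) with (4 * L ^ 2) in HL by ring; rewrite HL2 in HL.
    replace ((1 - e ^ 2) * (2 * D)) with (4 * (D * (1 - e ^ 2) / (2 * (1 - 2 * e))) * (1 - 2 * e))
      by (field; lra).
    apply Rmult_le_compat_r; lra. }
  rewrite Hs in Hpoly.
  assert (Hgap : E * L ^ 2 + (1 - e ^ 2) * (1 + e) ^ 2 / (16 * e ^ 2)
                 = (1 - e ^ 2) / (16 * e ^ 2 * r ^ 2 * (1 - 2 * e))
                   * ((1 + e) ^ 2 * (1 - 2 * e) * r ^ 2 - e ^ 2 * (2 * r - t ^ 2) * (2 * D))).
  { rewrite HL2; replace E with ((t ^ 2 - 2 * r) / (4 * r ^ 2)) by (field_simplify_eq; lra).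
    field; repeat split; try lra; apply pow_nonzero; lra. }
  assert (0 <= (1 - e ^ 2) / (16 * e ^ 2 * r ^ 2 * (1 - 2 * e))).
  { apply Rle_mult_inv_pos; [nra|].
    apply Rmult_lt_0_compat; [|lra]. apply Rmult_lt_0_compat; [nra|]. apply pow_lt; lra. }
  assert (0 <= (1 - e ^ 2) / (16 * e ^ 2 * r ^ 2 * (1 - 2 * e))
               * ((1 + e) ^ 2 * (1 - 2 * e) * r ^ 2 - e ^ 2 * (2 * r - t ^ 2) * (2 * D)))
    by (apply Rmult_le_pos; lra).
  lra.
Qed.

Lemma escape_energy_momentum (D r1 r2 m k a1 b1 a2 b2 c L E : R) :
  0 < D -> 0 < r1 -> 0 < r2 ->
  m ^ 2 + k ^ 2 = r1 ^ 2 -> (m - D) ^ 2 + k ^ 2 = r2 ^ 2 ->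
  a1 ^ 2 + b1 ^ 2 < 2 / r1 -> 2 / r1 <= c ^ 2 + b1 ^ 2 -> a1 <= c <= a2 ->
  2 * L = m * b1 - k * a1 + ((m - D) * b2 - k * a2) ->
  4 * E = a1 ^ 2 + b1 ^ 2 - 2 / r1 + (a2 ^ 2 + b2 ^ 2 - 2 / r2) ->
  exists t, 0 <= t /\ 4 * r2 ^ 2 * E = t ^ 2 - 2 * r2 /\
            (2 * L) ^ 2 <= (sqrt (2 * (r2 + D)) + t) ^ 2.
Proof.
  intros HD Hr1 Hr2 Hx1 Hx2 Hbound Hesc [Hac Hca] HL HE.
  set (c0 := sqrt (2 / r1 - b1 ^ 2)).
  assert (Hc0 : c0 ^ 2 = 2 / r1 - b1 ^ 2) by (apply pow2_sqrt; nra).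
  assert (Hc0pos : 0 <= c0) by apply sqrt_pos.
  assert (Ha1c0 : - c0 < a1 <= c0) by (split; nra).
  assert (Hc0c : c0 <= c).
  { destruct (Rle_dec c0 c) as [|Hlt]; [assumption|].
    assert (0 < (c0 - c) * (c0 + c)) by (apply Rmult_lt_0_compat; lra).
    nra. }
  set (a := a1 + a2 - c0).
  set (Q := a1 ^ 2 + a2 ^ 2 + b2 ^ 2 - c0 ^ 2).
  assert (HaQ : a ^ 2 + b2 ^ 2 <= Q).
  { assert (Hid : Q - (a ^ 2 + b2 ^ 2) = 2 * (c0 - a1) * (a2 - c0)) by (unfold Q, a; ring).
    assert (0 <= 2 * (c0 - a1) * (a2 - c0)) by (apply Rmult_le_pos; lra).
    lra. }
  assert (HQ : 0 <= Q) by (pose proof (pow2_ge_0 a); pose proof (pow2_ge_0 b2); lra).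
  exists (r2 * sqrt Q).
  assert (Ht2 : (r2 * sqrt Q) ^ 2 = r2 ^ 2 * Q) by (rewrite Rpow_mult_distr, pow2_sqrt; lra).
  split; [|split].
  - apply Rmult_le_pos; [lra | apply sqrt_pos].
  - replace (4 * r2 ^ 2 * E) with (r2 ^ 2 * (4 * E)) by ring.
    rewrite Ht2, HE; unfold Q; rewrite Hc0; field; lra.
  - assert (Hr1D : r1 <= r2 + D).
    { assert (m - D <= r2) by nra.
      assert (r1 ^ 2 <= (r2 + D) ^ 2) by nra.
      nra. }
    assert (HX : (m * b1 - k * c0) ^ 2 <= sqrt (2 * (r2 + D)) ^ 2).
    { rewrite pow2_sqrt by lra.
      pose proof (cauchy_schwarz_cross m k b1 c0) as Hcs.
      rewrite Hx1 in Hcs; replace (b1 ^ 2 + c0 ^ 2) with (2 / r1) in Hcs by lra.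
      replace (r1 ^ 2 * (2 / r1)) with (2 * r1) in Hcs by (field; lra).
      lra. }
    assert (HY : ((m - D) * b2 - k * a) ^ 2 <= (r2 * sqrt Q) ^ 2).
    { pose proof (cauchy_schwarz_cross (m - D) k b2 a) as Hcs.
      rewrite Hx2 in Hcs; rewrite Ht2.
      apply (Rle_trans _ _ _ Hcs), Rmult_le_compat_l; nra. }
    replace (2 * L) with ((m * b1 - k * c0) + ((m - D) * b2 - k * a)) by (unfold a; lra).
    apply pow2_add_le; auto using sqrt_pos.
    apply Rmult_le_pos; [lra | apply sqrt_pos].
Qed.

Lemma ellip_cond_energy_mono (D E E' L : R) : E' <= E -> ellip_cond D E L -> ellip_cond D E' L.
Proof. intros HE [Hg Hc]; split; [exact Hg|]; pose proof (pow2_ge_0 L); nra. Qed.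

Lemma v1out_energy_neg (eps D : R) (x1 x2 v1 v2 : vec) :
  0 < D -> 0 <= eps <= 1 -> x1 <> (0, 0) -> x2 <> (0, 0) ->
  vnorm (vsub x1 x2) = D ->
  dot (cnormal D x1 x2) (relvel v1 v2) < 0 ->
  energy x1 v1 < 0 ->
  ellip_cond D (totE x1 v1 x2 v2) (totL x1 v1 x2 v2) ->
  energy x1 (v1out eps D x1 x2 v1 v2) < 0.
Proof.
  intros HD Heps Hx1 Hx2 Hdist Happr HE1 [Hgam Hcond].
  pose proof (cnormal_unit D x1 x2 HD Hdist) as Hn.
  pose proof (dot_cnormal_sub D x1 x2 ltac:(lra)) as Hx2n.
  pose proof (angmom_cnormal_sub D x1 x2) as Hx2t.
  pose proof (vnorm_pos x1 Hx1) as Hr1; pose proof (vnorm_pos x2 Hx2) as Hr2.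
  rewrite v1out_kick, dot_relvel; rewrite dot_relvel in Happr.
  set (n := cnormal D x1 x2) in *.
  set (X := (1 - eps) * (dot n v1 - dot n v2)).
  assert (Hframe : forall v, dot v v = dot n v ^ 2 + angmom n v ^ 2)
    by (intro v; rewrite <- lagrange_dot_angmom, Hn; ring).
  assert (Hang : forall x v, angmom x v = dot n x * angmom n v - angmom n x * dot n v)
    by (intros; rewrite <- angmom_frame, Hn; ring).
  apply Rnot_le_lt; intro Hesc; apply (Rlt_not_le _ _ Hcond).
  unfold energy in HE1, Hesc; rewrite Hframe, dot_kick, angmom_kick, Hn, Rmult_1_r in Hesc.
  destruct (escape_energy_momentum D (vnorm x1) (vnorm x2) (dot n x1) (angmom n x1)
              (dot n v1) (angmom n v1) (dot n v2) (angmom n v2) (dot n v1 - X)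
              (totL x1 v1 x2 v2) (totE x1 v1 x2 v2) HD Hr1 Hr2) as (t & Ht & HEt & HLt).
  - rewrite vnorm_pow2, Hframe; reflexivity.
  - rewrite vnorm_pow2, Hframe, Hx2n, Hx2t, Hn; ring.
  - rewrite Hframe in HE1; unfold Rdiv in *; lra.
  - unfold Rdiv in *; lra.
  - assert (0 <= (1 - eps) * (dot n v2 - dot n v1)) by (apply Rmult_le_pos; lra).
    assert (0 <= eps * (dot n v2 - dot n v1)) by (apply Rmult_le_pos; lra).
    unfold X; split; lra.
  - unfold totL, mu1, mu2; rewrite (Hang x1 v1), (Hang x2 v2), Hx2n, Hx2t, Hn; field.
  - unfold totE, energy, mu1, mu2; rewrite (Hframe v1), (Hframe v2); field; lra.
  - exact (energy_momentum_bound D (vnorm x2) t _ _ HD Hr2 Ht HEt HLt Hgam).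
Qed.

Theorem theorem3 (R1 R2 eps : R) (x1 x2 v1 v2 : vec) :
  0 < R1 -> 0 < R2 -> 0 <= eps <= 1/2 ->
  x1 <> (0, 0) -> x2 <> (0, 0) ->
  vnorm (vsub x1 x2) = R1 + R2 ->
  dot (cnormal (R1 + R2) x1 x2) (relvel v1 v2) < 0 ->
  energy x1 v1 < 0 -> energy x2 v2 < 0 ->
  ellip_cond (R1 + R2) (totE x1 v1 x2 v2) (totL x1 v1 x2 v2) ->
  energy x1 (v1out eps (R1 + R2) x1 x2 v1 v2) < 0 /\
  energy x2 (v2out eps (R1 + R2) x1 x2 v1 v2) < 0 /\
  ellip_cond (R1 + R2)
    (totE x1 (v1out eps (R1 + R2) x1 x2 v1 v2) x2 (v2out eps (R1 + R2) x1 x2 v1 v2))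
    (totL x1 (v1out eps (R1 + R2) x1 x2 v1 v2) x2 (v2out eps (R1 + R2) x1 x2 v1 v2)).
Proof.
  intros HR1 HR2 Heps Hx1 Hx2 Hdist Happr HE1 HE2 Hcond.
  assert (HD : 0 < R1 + R2) by lra.
  split; [|split].
  - apply v1out_energy_neg; auto; lra.
  - rewrite v2out_swap; apply v1out_energy_neg; auto; try lra.
    + now rewrite vnorm_vsub_swap.
    + now rewrite approach_swap.
    + now rewrite totE_swap, totL_swap.
  - rewrite totL_out; apply (ellip_cond_energy_mono _ (totE x1 v1 x2 v2)); [|exact Hcond].
    rewrite totE_out by exact (cnormal_unit _ _ _ HD Hdist).
    assert (0 <= eps * (1 - eps) * dot (cnormal (R1 + R2) x1 x2) (relvel v1 v2) ^ 2)
      by (apply Rmult_le_pos; [nra | apply pow2_ge_0]).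
    lra.
Qed.
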